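(* Let $G$ be a group with neutral element $e$ and let $S=\bigoplus_{g\in G}S_g$ be an epsilon-strongly $G$-graded ring. (a) If $S_e$ is block decomposable, then $S$ is epsilon-finitely $G$-graded. (b) If $S_e$ is left or right noetherian, then $S$ is epsilon-finitely $G$-graded. In particular, if $S_e$ is left or right noetherian and $N$ is any normal subgroup of $G$, then the induced $G/N$-grading of $S$ is epsilon-strong.
   Context: Rings are associative, not necessarily unital; $AB$ denotes finite sums of products. A $G$-grading ($S=\bigoplus_gS_g$, $S_gS_h\subseteq S_{gh}$) is epsilon-strong if $S_gS_{g^{-1}}S_g=S_g$ for all $g$ and each ring $S_gS_{g^{-1}}$ has a multiplicative identity element $\epsilon_g$ (then $S$ and $S_e$ are unital and the $\epsilon_g$ are central idempotents of $S_e$). It is epsilon-finite if it is epsilon-strong and $\bigvee\{\epsilon_g\mid g\in G\}$ (the set of finite joins, $a\vee b=a+b-ab$) is finite. A unital ring $R$ is block decomposable if $1=c_1+\cdots+c_r$ with each $c_i$ a central primitive idempotent. Induced grading: $S_C=\bigoplus_{g\in C}S_g$ for $C\in G/N$. *)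

From HB Require Import structures.
From mathcomp Require Import all_boot all_order all_algebra.
Set Implicit Arguments. Unset Strict Implicit. Unset Printing Implicit Defensive.
Import GRing.Theory.
Local Open Scope ring_scope.


Section Defs.
Variable S : pzRingType.

Definition seteq (A B : S -> Prop) : Prop := forall x, A x <-> B x.

Definition addsubgroup (A : S -> Prop) : Prop :=
  A 0 /\ (forall x y, A x -> A y -> A (x - y)).

Definition prodset (A B : S -> Prop) : S -> Prop :=
  fun x => exists l : seq (S * S),
    (forall p, p \in l -> A p.1 /\ B p.2) /\ x = \sum_(p <- l) (p.1 * p.2).

Definition is_identity_of (A : S -> Prop) (u : S) : Prop :=
  A u /\ (forall x, A x -> u * x = x /\ x * u = x).

Variable G : groupType.

Definition is_grading (Sg : G -> S -> Prop) : Prop :=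
  (forall g, addsubgroup (Sg g)) /\
  (forall g h x y, Sg g x -> Sg h y -> Sg (g * h)%g (x * y)) /\
  (forall s, exists l : seq (G * S),
      uniq (map fst l) /\ (forall p, p \in l -> Sg p.1 p.2) /\
      s = \sum_(p <- l) p.2) /\
  (forall l : seq (G * S),
      uniq (map fst l) -> (forall p, p \in l -> Sg p.1 p.2) ->
      \sum_(p <- l) p.2 = 0 -> forall p, p \in l -> p.2 = 0).

Definition eps_strong_family (I : Type) (inv : I -> I) (F : I -> S -> Prop)
  : Prop :=
  forall i, seteq (prodset (prodset (F i) (F (inv i))) (F i)) (F i) /\
            exists u, is_identity_of (prodset (F i) (F (inv i))) u.

Definition epsilon_strong (Sg : G -> S -> Prop) : Prop :=
  is_grading Sg /\ eps_strong_family (fun g => (g^-1)%g) Sg.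

Definition is_eps (Sg : G -> S -> Prop) (g : G) (u : S) : Prop :=
  is_identity_of (prodset (Sg g) (Sg (g^-1)%g)) u.

Definition join (a b : S) : S := a + b - a * b.

Definition finite_join_of_eps (Sg : G -> S -> Prop) (x : S) : Prop :=
  exists l : seq S, l != [::] /\
    (forall u, u \in l -> exists g, is_eps Sg g u) /\ x = foldr join 0 l.

Definition epsilon_finite (Sg : G -> S -> Prop) : Prop :=
  epsilon_strong Sg /\
  exists fin : seq S, forall x, finite_join_of_eps Sg x -> x \in fin.

Definition central_in (R : S -> Prop) (c : S) : Prop :=
  forall x, R x -> c * x = x * c.

Definition central_idempotent_of (R : S -> Prop) (c : S) : Prop :=
  R c /\ central_in R c /\ c * c = c.

Definition central_primitive_idempotent (R : S -> Prop) (c : S) : Prop :=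
  central_idempotent_of R c /\ c != 0 /\
  (forall c1 c2, central_idempotent_of R c1 -> central_idempotent_of R c2 ->
     c1 * c2 = 0 -> c = c1 + c2 -> c1 = 0 \/ c2 = 0).

Definition block_decomposable (R : S -> Prop) : Prop :=
  exists u, is_identity_of R u /\
  exists cs : seq S, (forall c, c \in cs -> central_primitive_idempotent R c) /\
    u = \sum_(c <- cs) c.

Definition left_ideal_of (R I : S -> Prop) : Prop :=
  (forall x, I x -> R x) /\ addsubgroup I /\
  (forall r x, R r -> I x -> I (r * x)).

Definition right_ideal_of (R I : S -> Prop) : Prop :=
  (forall x, I x -> R x) /\ addsubgroup I /\
  (forall r x, R r -> I x -> I (x * r)).

Definition left_noetherian (R : S -> Prop) : Prop :=
  forall I : nat -> S -> Prop, (forall n, left_ideal_of R (I n)) ->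
    (forall n x, I n x -> I n.+1 x) ->
    exists N, forall n, (N <= n)%N -> seteq (I n) (I N).

Definition right_noetherian (R : S -> Prop) : Prop :=
  forall I : nat -> S -> Prop, (forall n, right_ideal_of R (I n)) ->
    (forall n x, I n x -> I n.+1 x) ->
    exists N, forall n, (N <= n)%N -> seteq (I n) (I N).

(* Normal subgroups and the induced G/N-grading, where the coset gN is
   represented by g:  S_{gN} = (+)_{h in gN} S_h  (h in gN iff g^-1 h in N),
   and (gN)^-1 = g^-1 N. *)
Definition normal_subgroup (N : G -> Prop) : Prop :=
  N 1%g /\ (forall x y, N x -> N y -> N (x * y^-1)%g) /\
  (forall g n, N n -> N (g^-1 * n * g)%g).

Definition induced_component (Sg : G -> S -> Prop) (N : G -> Prop) (g : G)
  : S -> Prop :=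
  fun x => exists l : seq (G * S),
    (forall p, p \in l -> N (g^-1 * p.1)%g /\ Sg p.1 p.2) /\
    x = \sum_(p <- l) p.2.

End Defs.

From mathcomp Require Import all_boot all_order all_algebra.
From Stdlib Require Import ClassicalEpsilon Classical.
Set Implicit Arguments. Unset Strict Implicit. Unset Printing Implicit Defensive.
Import GRing.Theory.
Local Open Scope ring_scope.

(* The epsilon_g are central idempotents of S_e, and so are their finite
   joins, so for (a) and (b) it suffices that S_e has only finitely many
   central idempotents.  If S_e is block decomposable, every central
   idempotent is the sum of the blocks it contains.  If S_e is left or right
   noetherian, the ideals S_e c show that there is no strictly ascending chain
   of central idempotents, hence (via c |-> 1 - c) no strictly descending one;
   by well-founded induction each central idempotent x then has only finitely
   many below it, as either x is an atom or x = y + (x - y) with both parts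
   strictly smaller.  For the induced grading, the ascending chain condition
   yields a finite join epsilon of idempotents epsilon_h, h in gN, dominating
   all of them; epsilon lies in S_{gN} S_{g^-1 N} and is a left identity on
   S_{gN} and a right identity on S_{g^-1 N}. *)

Lemma wf_of_no_descending_chain (T : Type) (r : T -> T -> Prop) :
  (forall a : nat -> T, ~ (forall n, r (a n.+1) (a n))) -> well_founded r.
Proof.
move=> no_chain x; apply: NNPP => not_Acc_x.
have below y : ~ Acc r y -> exists z, r z y /\ ~ Acc r z.
  move=> not_Acc_y; apply: NNPP => no_z; apply: not_Acc_y; constructor => z rzy.
  by apply: NNPP => not_Acc_z; apply: no_z; exists z.
pose next y := epsilon (inhabits x) (fun z => r z y /\ ~ Acc r z).
have nextP y : ~ Acc r y -> r (next y) y /\ ~ Acc r (next y).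
  by move=> /below; apply: epsilon_spec.
have chainP n : ~ Acc r (iter n next x).
  by elim: n => [|n IH] //=; case: (nextP _ IH).
by apply: (no_chain (fun n => iter n next x)) => n; case: (nextP _ (chainP n)).
Qed.

Lemma wf_minimal (T : Type) (r : T -> T -> Prop) (P : T -> Prop) (x : T) :
  well_founded r -> P x -> exists m, P m /\ forall y, r y m -> ~ P y.
Proof.
move=> wf_r; elim/(well_founded_ind wf_r): x => x IH Px.
case: (classic (exists y, r y x /\ P y)) => [[y [ryx Py]]|no_y]; first exact: IH Py.
by exists x; split=> // y ryx Py; apply: no_y; exists y.
Qed.

Section SubsetSums.
Variable V : nmodType.

Fixpoint subset_sums (s : seq V) : seq V :=
  if s is c :: s' then subset_sums s' ++ map (+%R c) (subset_sums s') else [:: 0].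

Lemma sum_mem_subset_sums (s : seq V) (F : V -> V) :
  (forall c, c \in s -> F c = 0 \/ F c = c) -> \sum_(c <- s) F c \in subset_sums s.
Proof.
elim: s => [|c s IH] F01 /=; first by rewrite big_nil mem_seq1.
have sum_s : \sum_(d <- s) F d \in subset_sums s.
  by apply: IH => d ds; apply: F01; rewrite in_cons ds orbT.
rewrite big_cons mem_cat; case: (F01 c (mem_head _ _)) => ->.
  by rewrite add0r sum_s.
by rewrite (map_f (+%R c) sum_s) orbT.
Qed.

End SubsetSums.

Section ProdSet.
Variable S : pzRingType.
Implicit Types (A B : S -> Prop) (x y a b r : S).

Lemma prodset_ind A B (P : S -> Prop) :
  P 0 -> (forall x y, P x -> P y -> P (x + y)) ->
  (forall a b, A a -> B b -> P (a * b)) -> forall x, prodset A B x -> P x.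
Proof.
move=> P0 PD PM x [l [lAB ->]]; rewrite big_seq.
by apply: big_ind => // p /lAB[]; apply: PM.
Qed.

Lemma prodset0 A B : prodset A B 0.
Proof. by exists [::]; rewrite big_nil. Qed.

Lemma prodsetD A B x y : prodset A B x -> prodset A B y -> prodset A B (x + y).
Proof.
move=> [l1 [l1AB ->]] [l2 [l2AB ->]]; exists (l1 ++ l2); rewrite big_cat.
by split=> // p; rewrite mem_cat => /orP[]; [apply: l1AB | apply: l2AB].
Qed.

Lemma prodset_mul A B a b : A a -> B b -> prodset A B (a * b).
Proof.
move=> Aa Bb; exists [:: (a, b)]; rewrite big_seq1.
by split=> // p; rewrite mem_seq1 => /eqP ->.
Qed.

Lemma prodsetS A B A' B' x :
  (forall a, A a -> A' a) -> (forall b, B b -> B' b) ->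
  prodset A B x -> prodset A' B' x.
Proof.
move=> AA' BB'; move: x; apply: prodset_ind => [|x y|a b Aa Bb].
- exact: prodset0.
- exact: prodsetD.
- by apply: prodset_mul; [apply: AA' | apply: BB'].
Qed.

Lemma prodsetMl A B r x :
  (forall a, A a -> A (r * a)) -> prodset A B x -> prodset A B (r * x).
Proof.
move=> Ar; move: x; apply: prodset_ind => [|x y Px Py|a b Aa Bb].
- by rewrite mulr0; apply: prodset0.
- by rewrite mulrDr; apply: prodsetD.
- by rewrite mulrA; apply: prodset_mul => //; apply: Ar.
Qed.

Lemma prodsetMr A B r x :
  (forall b, B b -> B (b * r)) -> prodset A B x -> prodset A B (x * r).
Proof.
move=> Br; move: x; apply: prodset_ind => [|x y Px Py|a b Aa Bb].
- by rewrite mul0r; apply: prodset0.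
- by rewrite mulrDl; apply: prodsetD.
- by rewrite -mulrA; apply: prodset_mul => //; apply: Br.
Qed.

Lemma identity_unique A u v : is_identity_of A u -> is_identity_of A v -> u = v.
Proof. by move=> [Au idu] [Av idv]; rewrite -(proj2 (idv _ Au)) (proj1 (idu _ Av)). Qed.

End ProdSet.

Section CentralIdempotents.
Variables (S : pzRingType) (R : S -> Prop) (u : S).
Hypotheses (addR : addsubgroup R) (mulR : forall x y, R x -> R y -> R (x * y)).
Hypothesis idR : is_identity_of R u.
Local Notation cidem := (central_idempotent_of R).

Definition cidem_lt (y x : S) : Prop := cidem y /\ cidem x /\ y * x = y /\ y <> x.

Let R0 : R 0. Proof. by case: addR. Qed.
Let RB x y : R x -> R y -> R (x - y). Proof. by case: addR => _; apply. Qed.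
Let Ru : R u. Proof. by case: idR. Qed.
Let mul1R x : R x -> u * x = x. Proof. by move=> Rx; case: idR => _ /(_ x Rx)[]. Qed.
Let mulR1 x : R x -> x * u = x. Proof. by move=> Rx; case: idR => _ /(_ x Rx)[]. Qed.

Lemma cidemR a : cidem a -> R a. Proof. by case. Qed.
Lemma cidem_idem a : cidem a -> a * a = a. Proof. by case=> _ []. Qed.
Lemma cidem_comm a x : cidem a -> R x -> a * x = x * a.
Proof. by case=> _ [+ _]; apply. Qed.

Lemma cidem0 : cidem 0.
Proof. by split; [exact: R0 | rewrite mulr0; split=> // x _; rewrite mul0r mulr0]. Qed.

Lemma cidem1 : cidem u.
Proof. by split; [exact: Ru | split=> [x Rx|]; rewrite ?mul1R ?mulR1]. Qed.

Lemma cidemM a b : cidem a -> cidem b -> cidem (a * b).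
Proof.
move=> ca cb; split; first by apply: mulR; apply: cidemR.
split=> [x Rx|].
  by rewrite -mulrA (cidem_comm cb Rx) mulrA (cidem_comm ca Rx) mulrA.
rewrite -mulrA [b * _]mulrA -(cidem_comm ca (cidemR cb)) -mulrA (cidem_idem cb).
by rewrite mulrA (cidem_idem ca).
Qed.

Lemma cidemC a : cidem a -> cidem (u - a).
Proof.
move=> ca; have Ra := cidemR ca; split; first exact: RB.
split=> [x Rx|]; first by rewrite mulrBl mulrBr mul1R // mulR1 // (cidem_comm ca Rx).
by rewrite mulrBl !mulrBr !mul1R // mulR1 // cidem_idem // subrr subr0.
Qed.

Lemma cidem_joinE a b : cidem a -> cidem b -> join a b = u - (u - a) * (u - b).
Proof.
move=> ca cb; have Ra := cidemR ca; have Rb := cidemR cb.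
rewrite /join mulrBl !mulrBr !mul1R // mulR1 //.
by rewrite opprB opprB addrCA [u + _]addrC subrK addrAC.
Qed.

Lemma cidem_join a b : cidem a -> cidem b -> cidem (join a b).
Proof. by move=> ca cb; rewrite cidem_joinE //; apply/cidemC/cidemM; apply: cidemC. Qed.

Lemma cidem_foldr_join (es : seq S) :
  (forall e, e \in es -> cidem e) -> cidem (foldr (@join S) 0 es).
Proof.
elim: es => [|e es IH] c_es /=; first exact: cidem0.
apply: cidem_join; first by apply: c_es; rewrite mem_head.
by apply: IH => f es_f; apply: c_es; rewrite in_cons es_f orbT.
Qed.

Lemma cidem_mul_joinl a b : cidem a -> a * join a b = a.
Proof. by move=> ca; rewrite /join !mulrBr mulrDr mulrA cidem_idem // addrK. Qed.

Lemma cidem_mul_joinr a b : cidem a -> cidem b -> b * join a b = b.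
Proof.
move=> ca cb; rewrite /join !mulrBr mulrDr mulrA (cidem_idem cb).
by rewrite -(cidem_comm ca (cidemR cb)) -mulrA (cidem_idem cb) addrC addKr.
Qed.

Lemma cidem_lt_compl y x : cidem_lt y x -> cidem_lt (u - x) (u - y).
Proof.
move=> [cy [cx [yx y_neq_x]]]; split; first exact: cidemC.
split; first exact: cidemC.
split; last by move=> /addrI /oppr_inj /esym.
have Rx := cidemR cx; have Ry := cidemR cy.
rewrite mulrBl !mulrBr !mul1R // mulR1 // (cidem_comm cx Ry) yx.
by rewrite opprB addrA subrK.
Qed.

Lemma noetherian_no_ascending_chain (a : nat -> S) :
  left_noetherian R \/ right_noetherian R -> ~ (forall n, cidem_lt (a n) (a n.+1)).
Proof.
move=> noeth asc; have ca n : cidem (a n) by case: (asc n).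
pose I n z := exists2 r, R r & z = r * a n.
have IR n z : I n z -> R z by case=> r Rr ->; apply: mulR => //; apply: cidemR.
have addI n : addsubgroup (I n).
  split; first by rewrite /I; exists 0; rewrite ?mul0r.
  by move=> _ _ [r Rr ->] [s Rs ->]; exists (r - s); rewrite ?mulrBl //; apply: RB.
have lI n : left_ideal_of R (I n).
  split; [exact: IR | split=> // r _ Rr [s Rs ->]].
  by exists (r * s); rewrite ?mulrA //; apply: mulR.
have rI n : right_ideal_of R (I n).
  split; [exact: IR | split=> // r _ Rr [s Rs ->]].
  exists (s * r); first exact: mulR.
  by rewrite -!mulrA (cidem_comm (ca n) Rr).
have incI n z : I n z -> I n.+1 z.
  case=> r Rr ->; exists (r * a n); first by apply: mulR => //; apply: cidemR.
  by case: (asc n) => _ [_ [lt_n _]]; rewrite -mulrA lt_n.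
have [N stable] : exists N, forall n, (N <= n)%N -> seteq (I n) (I N).
  by case: noeth => noeth; apply: noeth.
have [r Rr aN1E] : I N (a N.+1).
  by apply/(stable N.+1 (leqnSn N)); exists u; rewrite ?mul1R //; apply: cidemR.
case: (asc N) => _ [_ [lt_N neq_N]]; apply: neq_N.
rewrite -{1}lt_N (cidem_comm (ca N) (cidemR (ca N.+1))) {1}aN1E -mulrA.
by rewrite (cidem_idem (ca N)) -aN1E.
Qed.

Lemma noetherian_wf_cidem_gt : left_noetherian R \/ right_noetherian R ->
  well_founded (fun x y => cidem_lt y x).
Proof.
move=> noeth; apply: wf_of_no_descending_chain => a.
exact: noetherian_no_ascending_chain.
Qed.

Lemma noetherian_wf_cidem_lt :
  left_noetherian R \/ right_noetherian R -> well_founded cidem_lt.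
Proof.
move=> noeth; apply: wf_of_no_descending_chain => a desc.
apply: (noetherian_no_ascending_chain (a := fun n => u - a n) noeth) => n.
exact: cidem_lt_compl.
Qed.

Lemma cidem_below_finite : well_founded cidem_lt ->
  forall x, cidem x -> exists l : seq S, forall z, cidem z -> z * x = z -> z \in l.
Proof.
move=> wf_lt x; elim/(well_founded_ind wf_lt): x => x IH cx.
case: (classic (exists y, cidem_lt y x /\ y <> 0)) => [[y [y_lt_x y_neq0]]|atom].
  have [cy [_ [yx _]]] := y_lt_x.
  have xy : x * y = y by rewrite (cidem_comm cx (cidemR cy)).
  have cw : cidem (x - y).
    have -> : x - y = x * (u - y) by rewrite mulrBr mulR1 ?xy //; apply: cidemR.
    by apply: cidemM => //; apply: cidemC.
  have w_lt_x : cidem_lt (x - y) x.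
    split=> //; split=> //; split; first by rewrite mulrBl cidem_idem // yx.
    move=> xyx; apply: y_neq0; apply: oppr_inj; apply: (@addrI _ x).
    by rewrite xyx oppr0 addr0.
  have [ly below_y] := IH y y_lt_x cy.
  have [lw below_w] := IH (x - y) w_lt_x cw.
  exists [seq a + b | a <- ly, b <- lw] => z cz zx.
  have -> : z = z * y + z * (x - y) by rewrite mulrBr zx addrC subrK.
  apply: allpairs_f.
  - by apply: below_y; [apply: cidemM | rewrite -mulrA cidem_idem].
  - by apply: below_w; [apply: cidemM | rewrite -mulrA cidem_idem].
exists [:: 0; x] => z cz zx; case: (z =P 0) => [->|z_neq0]; first exact: mem_head.
case: (z =P x) => [->|z_neq_x]; first by rewrite !inE eqxx orbT.
by case: atom; exists z.
Qed.

Lemma cidem_finite_of_wf :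
  well_founded cidem_lt -> exists l : seq S, forall z, cidem z -> z \in l.
Proof.
move=> wf_lt; have [l below_u] := cidem_below_finite wf_lt cidem1.
by exists l => z cz; apply: below_u => //; apply/mulR1/cidemR.
Qed.

Lemma block_decomposable_cidem_finite :
  block_decomposable R -> exists l : seq S, forall z, cidem z -> z \in l.
Proof.
move=> [u' [idR' [cs [prim_cs sum_cs]]]].
exists (subset_sums cs) => z cz; have Rz := cidemR cz.
have -> : z = \sum_(c <- cs) z * c.
  by rewrite -mulr_sumr -sum_cs (identity_unique idR' idR) mulR1.
apply: sum_mem_subset_sums => c /prim_cs[cc [_ prim_c]]; have Rc := cidemR cc.
have split_c : c = z * c + c * (u - z).
  by rewrite mulrBr mulR1 // (cidem_comm cc Rz) addrC subrK.
have orth : z * c * (c * (u - z)) = 0.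
  rewrite -mulrA [c * (c * _)]mulrA cidem_idem // mulrBr mulR1 //.
  by rewrite (cidem_comm cc Rz) mulrBr mulrA cidem_idem // subrr.
case: (prim_c _ _ (cidemM cz cc) (cidemM cc (cidemC cz)) orth split_c) => [|c_cz0].
  by left.
by right; rewrite {2}split_c c_cz0 addr0.
Qed.

Lemma join_closed_upper_bound (E P : S -> Prop) p0 :
  well_founded (fun x y => cidem_lt y x) ->
  (forall e, E e -> cidem e) -> (forall p, P p -> cidem p) -> P p0 ->
  (forall e p, E e -> P p -> P (join e p)) ->
  exists2 m, P m & forall e, E e -> e * m = e.
Proof.
move=> wf_gt cE cP Pp0 joinP; have [m [Pm maximal]] := wf_minimal wf_gt Pp0.
exists m => // e Ee; have ce := cE e Ee; have cm := cP m Pm.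
have join_em : join e m = m.
  apply: NNPP => neq; apply: (maximal (join e m)); last exact: joinP.
  do 2!split=> //; first exact: cidem_join.
  by split; [exact: cidem_mul_joinr | exact: nesym].
by rewrite -join_em cidem_mul_joinl.
Qed.

End CentralIdempotents.

Section EpsilonStrongGrading.
Variables (G : groupType) (S : pzRingType) (Sg : G -> S -> Prop).
Hypothesis Sg_eps : epsilon_strong Sg.
Local Notation Se := (Sg 1%g).

Lemma Sg_addsubgroup g : addsubgroup (Sg g).
Proof. by case: Sg_eps => [[addSg _] _]. Qed.

Lemma Sg0 g : Sg g 0.
Proof. by case: (Sg_addsubgroup g). Qed.

Lemma SgN g x : Sg g x -> Sg g (- x).
Proof. by case: (Sg_addsubgroup g) => Sg0g SgB /(SgB _ _ Sg0g); rewrite sub0r. Qed.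

Lemma SgD g x y : Sg g x -> Sg g y -> Sg g (x + y).
Proof.
by case: (Sg_addsubgroup g) => _ SgB Sgx /SgN /(SgB _ _ Sgx); rewrite opprK.
Qed.

Lemma SgM g h x y : Sg g x -> Sg h y -> Sg (g * h)%g (x * y).
Proof. by case: Sg_eps => [[_ [SgM _]] _]; apply: SgM. Qed.

Lemma SeMl g x y : Se x -> Sg g y -> Sg g (x * y).
Proof. by rewrite -{2}[g]mul1g; apply: SgM. Qed.

Lemma SgMr g x y : Sg g x -> Se y -> Sg g (x * y).
Proof. by rewrite -{2}[g]mulg1; apply: SgM. Qed.

Lemma SeM x y : Se x -> Se y -> Se (x * y).
Proof. exact: SeMl. Qed.

Lemma prodset_Sg g h x : prodset (Sg g) (Sg h) x -> Sg (g * h)%g x.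
Proof. by move: x; apply: prodset_ind; [apply: Sg0 | apply: SgD | apply: SgM]. Qed.

Lemma Sg_sub_triple_product g x :
  Sg g x -> prodset (prodset (Sg g) (Sg g^-1)) (Sg g) x.
Proof. by case: Sg_eps => _ /(_ g) [/(_ x) []]. Qed.

Lemma exists_eps g : exists e, is_eps Sg g e.
Proof. by case: Sg_eps => _ /(_ g) []. Qed.

Section Eps.
Variables (g : G) (e : S).
Hypothesis eps_e : is_eps Sg g e.

Lemma eps_Se : Se e.
Proof. by case: eps_e => /prodset_Sg; rewrite mulgV. Qed.

Lemma eps_mull x : Sg g x -> e * x = x.
Proof.
move/Sg_sub_triple_product; move: x; apply: prodset_ind => [|x y ex ey|p c Pp _].
- by rewrite mulr0.
- by rewrite mulrDr ex ey.
- by rewrite mulrA (proj1 (proj2 eps_e p Pp)).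
Qed.

Lemma eps_mulr x : Sg g^-1 x -> x * e = x.
Proof.
move/Sg_sub_triple_product; rewrite invgK; move: x.
apply: prodset_ind => [|x y xe ye|p c + Sc]; first by rewrite mul0r.
  by rewrite mulrDl xe ye.
move: p; apply: prodset_ind => [|x y xe ye|a b _ Sb]; first by rewrite !mul0r.
  by rewrite !mulrDl xe ye.
by rewrite -!mulrA [b * (c * e)]mulrA (proj2 (proj2 eps_e _ (prodset_mul Sb Sc))).
Qed.

Lemma eps_cidem : central_idempotent_of Se e.
Proof.
have Pe := proj1 eps_e; split; first exact: eps_Se.
split; last exact: (proj1 (proj2 eps_e e Pe)).
move=> r Se_r.
have -> : e * r = e * r * e.
  by rewrite (proj2 (proj2 eps_e _ (prodsetMr (fun b Sb => SgMr Sb Se_r) Pe))).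
by rewrite -mulrA (proj1 (proj2 eps_e _ (prodsetMl (fun a Sa => SeMl Se_r Sa) Pe))).
Qed.

End Eps.

Lemma Se_identity : exists u, is_identity_of Se u.
Proof.
have [u eps1] := exists_eps 1%g; exists u; split; first exact: eps_Se eps1.
move=> x Se_x; split; first exact: eps_mull eps1 _ Se_x.
by apply: (eps_mulr eps1); rewrite invg1.
Qed.

Lemma finite_join_of_eps_cidem x :
  finite_join_of_eps Sg x -> central_idempotent_of Se x.
Proof.
have [u idSe] := Se_identity; move=> [l [_ [l_eps ->]]].
apply: (cidem_foldr_join (Sg_addsubgroup 1) SeM idSe) => e /l_eps [g].
exact: eps_cidem.
Qed.

Lemma epsilon_finite_of_cidem_finite :
  (exists l : seq S, forall z, central_idempotent_of Se z -> z \in l) ->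
  epsilon_finite Sg.
Proof.
move=> [l cidem_l]; split=> //; exists l => x join_x.
exact/cidem_l/finite_join_of_eps_cidem.
Qed.

End EpsilonStrongGrading.

Section InducedGrading.
Variables (G : groupType) (S : pzRingType) (Sg : G -> S -> Prop).
Hypothesis Sg_eps : epsilon_strong Sg.
Variable N : G -> Prop.
Hypothesis N_normal : normal_subgroup N.
Local Notation Se := (Sg 1%g).
Local Notation SC := (induced_component Sg N).

Let N1 : N 1%g. Proof. by case: N_normal. Qed.
Let NV x : N x -> N x^-1.
Proof. by case: N_normal => _ [NMV _] Nx; rewrite -[x^-1%g]mul1g; apply: NMV. Qed.
Let NM x y : N x -> N y -> N (x * y)%g.
Proof. by case: N_normal => _ [NMV _] Nx /NV; rewrite -{2}[y]invgK; apply: NMV. Qed.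
Let NJ g n : N n -> N (g^-1 * n * g)%g.
Proof. by case: N_normal => _ [_]; apply. Qed.

Lemma induced_component0 g : SC g 0.
Proof. by exists [::]; rewrite big_nil. Qed.

Lemma induced_componentD g x y : SC g x -> SC g y -> SC g (x + y).
Proof.
move=> [l1 [l1_in ->]] [l2 [l2_in ->]]; exists (l1 ++ l2); rewrite big_cat.
by split=> // p; rewrite mem_cat => /orP[]; [apply: l1_in | apply: l2_in].
Qed.

Lemma induced_component_Sg g h x : N (g^-1 * h)%g -> Sg h x -> SC g x.
Proof.
move=> Nh Sx; exists [:: (h, x)]; rewrite big_seq1.
by split=> // p; rewrite mem_seq1 => /eqP ->.
Qed.

Lemma induced_componentM g1 g2 x y :
  SC g1 x -> SC g2 y -> SC (g1 * g2)%g (x * y).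
Proof.
move=> [l1 [l1_in ->]] [l2 [l2_in ->]]; rewrite mulr_suml big_seq.
apply: big_ind => [|x1 x2|p /l1_in [Np Sp]];
  [exact: induced_component0 | exact: induced_componentD |].
rewrite mulr_sumr big_seq.
apply: big_ind => [|y1 y2|q /l2_in [Nq Sq]];
  [exact: induced_component0 | exact: induced_componentD |].
apply: (@induced_component_Sg _ (p.1 * q.1)%g); last exact: SgM.
have -> : ((g1 * g2)^-1 * (p.1 * q.1) =
           (g2^-1 * (g1^-1 * p.1) * g2) * (g2^-1 * q.1))%g.
  by rewrite invgM -!mulgA mulVKg.
by apply: NM => //; apply: NJ.
Qed.

Lemma prodset_induced_component g h x :
  prodset (SC g) (SC h) x -> SC (g * h)%g x.
Proof.
move: x; apply: prodset_ind; [exact: induced_component0 | exact: induced_componentD |].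
exact: induced_componentM.
Qed.

Lemma induced_component_SeMl g r x : Se r -> SC g x -> SC g (r * x).
Proof.
move=> Se_r; rewrite -{2}[g]mul1g; apply: induced_componentM.
by apply: (@induced_component_Sg _ 1%g) => //; rewrite mulg1 invg1.
Qed.

Lemma coset_inv g h : N (g^-1 * h)%g -> N ((g^-1)^-1 * h^-1)%g.
Proof. by move=> /NV /(NJ g^-1); rewrite invgK invgM invgK mulgA mulgK. Qed.

Lemma eps_prodset_induced g h e :
  N (g^-1 * h)%g -> is_eps Sg h e -> prodset (SC g) (SC g^-1) e.
Proof.
move=> Nh [Pe _]; move: Pe; apply: prodsetS => a; first exact: induced_component_Sg.
exact/induced_component_Sg/coset_inv.
Qed.

Lemma induced_component_mull g M x :
  (forall h e, N (g^-1 * h)%g -> is_eps Sg h e -> M * e = e) -> SC g x -> M * x = x.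
Proof.
move=> Me [l [l_in ->]]; rewrite mulr_sumr; apply: eq_big_seq => p /l_in [Np Sp].
have [e eps_e] := exists_eps Sg_eps p.1.
by rewrite -(eps_mull Sg_eps eps_e Sp) mulrA (Me _ _ Np eps_e).
Qed.

Lemma induced_component_mulr g M x :
  (forall h e, N (g^-1 * h)%g -> is_eps Sg h e -> e * M = e) ->
  SC g^-1 x -> x * M = x.
Proof.
move=> eM [l [l_in ->]]; rewrite mulr_suml; apply: eq_big_seq => p /l_in [Np Sp].
have [e eps_e] := exists_eps Sg_eps p.1^-1.
have Sp' : Sg (p.1^-1)^-1 p.2 by rewrite invgK.
have Np' : N (g^-1 * p.1^-1)%g by move: (coset_inv Np); rewrite invgK.
by rewrite -(eps_mulr Sg_eps eps_e Sp') -mulrA (eM _ _ Np' eps_e).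
Qed.

Lemma join_eps_prodset_induced g (es : seq S) :
  (forall e, e \in es -> exists2 h, N (g^-1 * h)%g & is_eps Sg h e) ->
  prodset (SC g) (SC g^-1) (foldr (@join S) 0 es).
Proof.
elim: es => [|e es IH] es_eps /=; first exact: prodset0.
have [h Nh eps_e] := es_eps e (mem_head _ _).
have {}IH : prodset (SC g) (SC g^-1) (foldr (@join S) 0 es).
  by apply: IH => f es_f; apply: es_eps; rewrite in_cons es_f orbT.
apply: prodsetD; first exact: prodsetD (eps_prodset_induced Nh eps_e) IH.
rewrite -mulNr; apply: prodsetMl IH => a; apply: induced_component_SeMl.
exact/(SgN Sg_eps)/(eps_Se Sg_eps eps_e).
Qed.

Lemma induced_identity g : well_founded (fun x y => cidem_lt Se y x) ->
  exists2 M, prodset (SC g) (SC g^-1) M &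
    (forall x, SC g x -> M * x = x) /\ (forall x, SC g^-1 x -> x * M = x).
Proof.
move=> wf_gt; have [u idSe] := Se_identity Sg_eps.
have addSe := Sg_addsubgroup Sg_eps 1; have mulSe := SeM Sg_eps.
pose E e := exists2 h, N (g^-1 * h)%g & is_eps Sg h e.
pose P p := exists2 es : seq S, (forall e, e \in es -> E e) & p = foldr (@join S) 0 es.
have cE e : E e -> central_idempotent_of Se e by case=> h _; apply: eps_cidem.
have cP p : P p -> central_idempotent_of Se p.
  by case=> es es_E ->; apply: (cidem_foldr_join addSe mulSe idSe) => e /es_E /cE.
have P_join e p : E e -> P p -> P (join e p).
  move=> Ee [es es_E ->]; exists (e :: es) => // f.
  by rewrite in_cons => /predU1P [->|/es_E].
have P0 : P 0 by rewrite /P; exists [::].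
have [M PM M_bound] := join_closed_upper_bound addSe mulSe idSe wf_gt cE cP P0 P_join.
have cM := cP M PM.
exists M; first by case: PM => es es_E ->; apply: join_eps_prodset_induced.
split=> x.
- apply: induced_component_mull => h e Nh eps_e; have Ee : E e by exists h.
  by rewrite -(cidem_comm (cE e Ee) (cidemR cM)) M_bound.
- by apply: induced_component_mulr => h e Nh eps_e; apply: M_bound; exists h.
Qed.

Lemma induced_eps_strong : well_founded (fun x y => cidem_lt Se y x) ->
  eps_strong_family (fun g => (g^-1)%g) SC.
Proof.
move=> wf_gt g; have [M PM [M_l M_r]] := induced_identity g wf_gt.
split=> [x|]; first split.
- move=> Px; have : prodset (SC (g * g^-1)%g) (SC g) x.
    by apply: (prodsetS _ _ Px) => [p|//]; apply: (@prodset_induced_component g g^-1).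
  by move=> /(@prodset_induced_component _ _ x); rewrite mulgV mul1g.
- by move=> Sx; rewrite -(M_l x Sx); exact: prodset_mul PM Sx.
exists M; split; first exact: PM.
apply: prodset_ind => [|x y [xl xr] [yl yr]|a b Sa Sb].
- by rewrite mulr0 mul0r.
- by rewrite mulrDr mulrDl xl xr yl yr.
- by split; [rewrite mulrA (M_l a Sa) | rewrite -mulrA (M_r b Sb)].
Qed.

End InducedGrading.

Theorem theorem6p5 (G : groupType) (S : pzRingType) (Sg : G -> S -> Prop) :
  epsilon_strong Sg ->
  (block_decomposable (Sg 1%g) -> epsilon_finite Sg) /\
  (left_noetherian (Sg 1%g) \/ right_noetherian (Sg 1%g) -> epsilon_finite Sg) /\
  (left_noetherian (Sg 1%g) \/ right_noetherian (Sg 1%g) ->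
     forall N : G -> Prop, normal_subgroup N ->
       eps_strong_family (fun g => (g^-1)%g) (induced_component Sg N)).
Proof.
move=> Sg_eps; have [u idSe] := Se_identity Sg_eps.
have addSe := Sg_addsubgroup Sg_eps 1; have mulSe := SeM Sg_eps.
split; [|split].
- move=> /(block_decomposable_cidem_finite addSe mulSe idSe).
  exact: epsilon_finite_of_cidem_finite.
- move=> noeth; apply: (epsilon_finite_of_cidem_finite Sg_eps).
  exact/(cidem_finite_of_wf addSe mulSe idSe)/(noetherian_wf_cidem_lt addSe mulSe idSe).
- move=> noeth N N_normal; apply: (induced_eps_strong Sg_eps N_normal).
  exact: (noetherian_wf_cidem_gt addSe mulSe idSe).
Qed.
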